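(* Let $(H,L_H)$ be a right-resolving labeled graph presenting $Y=L_H(X_H)$, and let $x\in X_H$. Then $L_H : \mathbb U(x) \to \mathbb U(L_H(x))$ is surjective if and only if $$\{ L_H(\mu) : \mu \in X_H[0,\infty),\ s_H(\mu) = t_H(x_{(-\infty, k]})\} = \{ y \in Y[0,\infty): L_H(x_{(-\infty,k]})y \in Y \}$$ holds for all $k \in \mathbb Z$.
   Context: A labeled graph $(H,L_H)$: finite directed graph (vertices $V_H$, edges $E_H$, source/terminal maps $s_H,t_H$) without sinks or sources, labeling $L_H:E_H\to A$, edge shift $X_H$; $L_H$ acts coordinatewise on paths. $X_H[0,\infty)$ denotes right-infinite paths $e_0e_1\cdots$ and $s_H$ of such a path is the source of its first edge; $x_{(-\infty,k]}=\cdots x_{k-1}x_k$ and $t_H$ of it is the terminal vertex of $x_k$; $Y[0,\infty)=\{y_{[0,\infty)}:y\in Y\}$. Right-resolving: distinct edges with the same source have distinct labels. For a subshift $X$ and $x\in X$, $\mathbb U(x)=\{z\in X:\exists N\in\mathbb Z\ \forall i\le N,\ z_i=x_i\}$. *)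

From mathcomp Require Import all_boot all_order all_algebra.
Set Implicit Arguments. Unset Strict Implicit. Unset Printing Implicit Defensive.
Import Order.TTheory GRing.Theory Num.Theory.
Local Open Scope ring_scope.

Section LabeledGraphs.
Variables (V E : finType) (A : Type) (s t : E -> V) (L : E -> A).

Definition no_sinks_sources : Prop :=
  forall v : V, (exists e, s e = v) /\ (exists e, t e = v).

Definition right_resolving : Prop :=
  forall e f : E, s e = s f -> L e = L f -> e = f.

Definition edge_shift (x : int -> E) : Prop :=
  forall i : int, t (x i) = s (x (i + 1)).

Definition right_path (m : nat -> E) : Prop :=
  forall n : nat, t (m n) = s (m n.+1).

Definition label_shift (y : int -> A) : Prop :=
  exists x, edge_shift x /\ forall i : int, y i = L (x i).
End LabeledGraphs.

Definition right_half (T : Type) (Z : (int -> T) -> Prop) (w : nat -> T) : Prop :=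
  exists z, Z z /\ forall n : nat, w n = z (n%:Z).

Definition unstable_set (T : Type) (X : (int -> T) -> Prop) (x z : int -> T) : Prop :=
  X z /\ exists N : int, forall i : int, (i <= N)%R -> z i = x i.

(* the concatenation u_(-oo,k] w, placed so that u occupies positions <= k
   and w_n sits at position k+1+n *)
Definition left_concat (T : Type) (u : int -> T) (k : int) (w : nat -> T) : int -> T :=
  fun i => if (i <= k)%R then u i else w (absz (i - (k + 1))%R).

From mathcomp Require Import all_boot all_order all_algebra.
From mathcomp Require Import zify.
Set Implicit Arguments. Unset Strict Implicit. Unset Printing Implicit Defensive.
Import Order.TTheory GRing.Theory Num.Theory.
Local Open Scope ring_scope.

(* If a path mu leaves the vertex t(x_k), then x_(-oo,k] mu is a point of X_H,
   so L(mu) is a right-infinite word extending L(x_(-oo,k]) inside Y.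
   Conversely, if L : U(x) -> U(L(x)) is onto and L(x_(-oo,k]) w lies in Y,
   lift this point to some z in U(x); since H is right-resolving and z agrees
   with x far to the left, reading the common labels forward shows that z
   agrees with x up to k, so z_[k+1,oo) is a path from t(x_k) labelled w.
   If instead the follower-set identity holds for every k, a point of U(L(x))
   agreeing with L(x) up to N is L(x_(-oo,N]) w, and a path labelled w from
   t(x_N) glued to x_(-oo,N] lifts it. *)

Section LeftConcat.
Variable T : Type.
Implicit Types (u v : int -> T) (w : nat -> T).

Lemma left_concat_le u k w i : i <= k -> left_concat u k w i = u i.
Proof. by rewrite /left_concat => ->. Qed.

Lemma left_concat_tail u k w (n : nat) : left_concat u k w (k + 1 + n%:Z) = w n.
Proof.
rewrite /left_concat ifF; last by lia.
by congr w; lia.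
Qed.

Lemma left_concat_gt u k w i :
  k < i -> left_concat u k w i = w (absz (i - (k + 1))%R).
Proof. by rewrite /left_concat ltNge => /negbTE ->. Qed.

Lemma left_concat_eq u v k :
  (forall i, i <= k -> v i = u i) ->
  forall i, left_concat u k (fun n => v (k + 1 + n%:Z)) i = v i.
Proof.
move=> uv i; case: (lerP i k) => [le_ik | lt_ki]; first by rewrite left_concat_le ?uv.
by rewrite left_concat_gt //; congr v; lia.
Qed.

End LeftConcat.

Section LabeledGraph.
Variables (V E : finType) (A : Type) (s t : E -> V) (L : E -> A).

Lemma edge_shift_shift (z : int -> E) c :
  edge_shift s t z -> edge_shift s t (fun i => z (i + c)).
Proof. by move=> Ez i; rewrite Ez addrAC. Qed.

Lemma label_shift_shift (y : int -> A) c :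
  label_shift s t L y -> label_shift s t L (fun i => y (i + c)).
Proof.
move=> [z [Ez Lz]]; exists (fun i => z (i + c)); split => [|i //].
exact: edge_shift_shift.
Qed.

Lemma label_shift_ext (y y' : int -> A) :
  y =1 y' -> label_shift s t L y -> label_shift s t L y'.
Proof. by move=> yy' [z [Ez Lz]]; exists z; split=> // i; rewrite -yy'. Qed.

Lemma right_half_label_shift (u : int -> A) k w :
  label_shift s t L (left_concat u k w) -> right_half (label_shift s t L) w.
Proof.
move=> Y_uw; exists (fun i => left_concat u k w (i + (k + 1))); split.
  exact: label_shift_shift.
by move=> n; rewrite addrC left_concat_tail.
Qed.

Lemma edge_shift_left_concat (z : int -> E) k (mu : nat -> E) :
  edge_shift s t z -> right_path s t mu -> s (mu 0%N) = t (z k) ->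
  edge_shift s t (left_concat z k mu).
Proof.
move=> Ez Pmu mu0 i; case: (ltgtP i k) => [lt_ik | lt_ki | ->].
- by rewrite !left_concat_le ?Ez //; lia.
- rewrite !left_concat_gt ?Pmu; [|lia|lia].
  by congr (s (mu _)); lia.
- by rewrite left_concat_le // -(addr0 (k + 1)) left_concat_tail.
Qed.

(* Right-resolving graphs are forward-deterministic: a path is determined by
   one of its edges and the labels that follow it. *)
Lemma right_resolving_eq_left (z x : int -> E) (N k : int) :
  right_resolving s L -> edge_shift s t z -> edge_shift s t x ->
  (forall i, i <= N -> z i = x i) ->
  (forall i, i <= k -> L (z i) = L (x i)) ->
  forall i, i <= k -> z i = x i.
Proof.
move=> RR Ez Ex zxN Lzx.
have zx_from_N (n : nat) : N + n%:Z <= k -> z (N + n%:Z) = x (N + n%:Z).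
  elim: n => [|n IHn] le_k; first by rewrite addr0 zxN.
  have -> : N + n.+1%:Z = N + n%:Z + 1 by lia.
  apply: RR; last by apply: Lzx; lia.
  by rewrite -Ex -Ez IHn //; lia.
move=> i le_ik; case: (lerP i N) => [|lt_Ni]; first exact: zxN.
have -> : i = N + (absz (i - N)%R)%:Z by lia.
by apply: zx_from_N; lia.
Qed.

Variable x : int -> E.
Hypothesis Ex : edge_shift s t x.

Definition lifts_unstable_labels : Prop :=
  forall w : int -> A,
    unstable_set (label_shift s t L) (fun i => L (x i)) w ->
    exists z : int -> E,
      unstable_set (edge_shift s t) x z /\ forall i : int, L (z i) = w i.

Definition follower_label (k : int) (w : nat -> A) : Prop :=
  exists mu : nat -> E,
    right_path s t mu /\ s (mu 0%N) = t (x k) /\ forall n : nat, L (mu n) = w n.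

Lemma follower_label_extends k w :
  follower_label k w -> label_shift s t L (left_concat (fun i => L (x i)) k w).
Proof.
move=> [mu [Pmu [mu0 Lmu]]]; exists (left_concat x k mu); split.
  exact: edge_shift_left_concat.
by move=> i; rewrite /left_concat; case: ifP.
Qed.

Lemma extends_follower_label k w :
  right_resolving s L -> lifts_unstable_labels ->
  label_shift s t L (left_concat (fun i => L (x i)) k w) -> follower_label k w.
Proof.
move=> RR lift Y_xw.
have [|z [[Ez [N zxN]] Lz]] := lift (left_concat (fun i => L (x i)) k w).
  by split => //; exists k => i; apply: left_concat_le.
have zx : forall i, i <= k -> z i = x i.
  apply: (right_resolving_eq_left RR Ez Ex zxN) => i le_ik.
  by rewrite Lz left_concat_le.
exists (fun n => z (k + 1 + n%:Z)); split; last split.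
- by move=> n; rewrite Ez; congr (s (z _)); lia.
- by rewrite addr0 -Ez zx.
- by move=> n; rewrite Lz left_concat_tail.
Qed.

Lemma lifts_unstable_labels_of_follower :
  (forall k w, label_shift s t L (left_concat (fun i => L (x i)) k w) ->
     follower_label k w) ->
  lifts_unstable_labels.
Proof.
move=> follow w [Y_w [N wxN]].
have w_eq := left_concat_eq wxN.
have [mu [Pmu [mu0 Lmu]]] := follow N (fun n => w (N + 1 + n%:Z))
  (label_shift_ext (fsym w_eq) Y_w).
exists (left_concat x N mu); split.
  split; first exact: edge_shift_left_concat.
  by exists N => i; apply: left_concat_le.
by move=> i; rewrite -w_eq /left_concat; case: ifP.
Qed.

End LabeledGraph.

Theorem lemma2p5 (V E : finType) (A : Type) (s t : E -> V) (L : E -> A)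
  (x : int -> E) :
  no_sinks_sources s t ->
  right_resolving s L ->
  edge_shift s t x ->
  ((* L_H : U(x) -> U(L_H(x)) is surjective *)
   (forall w : int -> A,
      unstable_set (label_shift s t L) (fun i => L (x i)) w ->
      exists z : int -> E,
        unstable_set (edge_shift s t) x z /\ forall i : int, L (z i) = w i)
   <->
   (forall k : int, forall w : nat -> A,
      (exists mu : nat -> E,
         right_path s t mu /\ s (mu 0%N) = t (x k) /\
         forall n : nat, L (mu n) = w n)
      <->
      (right_half (label_shift s t L) w /\
       label_shift s t L (left_concat (fun i => L (x i)) k w)))).
Proof.
move=> _ RR Ex; split=> [lift k w | follow].
- split=> [follow_w | [_ Y_xw]].
    have Y_xw := follower_label_extends Ex follow_w.
    by split; first exact: right_half_label_shift Y_xw.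
  exact: (extends_follower_label Ex RR lift Y_xw).
- apply: (lifts_unstable_labels_of_follower Ex) => k w Y_xw.
  by apply/(follow k w); split; first exact: right_half_label_shift Y_xw.
Qed.
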